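(* Let $E$ be a countable set, $\sigma$ a random virtual permutation of $E$ with central law, $(\lambda_k)_{k\ge1}$ its sequence of asymptotic cycle lengths, and $C = L \cup \bigcup_k C_k$ the random space built from $(\lambda_k)$ as in the context. Define the random metric $D$ on $C$ by: $D(x,y) = \inf\{|a| : x - y \equiv a \pmod{\lambda_k}\}$ if $x, y \in C_k$ for the same $k$; $D(x,y) = 0$ if $x = y \in L$; $D(x,y) = 1$ otherwise. Suppose the probability space supports random variables $(X_x)_{x \in E}$ in $C$ which, conditionally on $(\lambda_k)$, are i.i.d. uniform on $C$, and such that almost surely: $X_x \in L$ iff $x$ is a fixed point of $\sigma$; for distinct $x,y$, $x \sim_\sigma y$ iff $X_x,X_y$ lie on the same circle $C_k$, in which case $\lambda(x)=\lambda(y)=\lambda_k$; and for distinct $x \sim_\sigma y$, $\delta(x,y) = X_y - X_x$ modulo $\lambda(x)$. Let $K := \{X_x : x \in E\}$. Then the map $x \mapsto X_x$ is almost surely a bijective isometry from $(E,d)$ onto $(K,D)$.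
   Context: A virtual permutation of $E$ is a family $\sigma=(\sigma_I)$ indexed by finite $I\subset E$, $\sigma_I$ a permutation of $I$, with $\sigma_I(x)=\sigma_J^m(x)$ ($m\ge1$ minimal with $\sigma_J^m(x)\in I$) for $I\subset J$; the space carries the $\sigma$-algebra generated by $\sigma\mapsto\sigma_J$. $x\sim_\sigma y$ iff $x,y$ lie in a common cycle of $\sigma_I$ for some (equivalently every) finite $I\ni x,y$; $\mathcal{C}_\sigma(x)$ is its class; $x$ is a fixed point if $\sigma_I(x)=x$ for all finite $I\ni x$. A law is central if each $\sigma_I$ has conjugation-invariant law. Under a central law: $\lambda(x)$ is the $L^1$ limit as $|I|\to\infty$ of $|I\cap\mathcal{C}_\sigma(x)|/|I|$; $\lambda_k$ is the supremum of $\min_{j\le k}\lambda(x_j)$ over pairwise non-equivalent $x_1,\dots,x_k$ (a.s. non-increasing with sum $\le1$); for $x\sim_\sigma y$, $k_I(x,y)\in\{0,\dots,|I\cap\mathcal{C}_\sigma(x)|-1\}$ satisfies $\sigma_I^{k_I(x,y)}(x)=y$, $\Delta(x,y)$ is the $L^1$ limit of $k_I(x,y)/|I|$, $\delta(x,y)$ its class mod $\lambda(x)$. The metric $d$ on $E$: $d(x,y)=1$ if $x\not\sim_\sigma y$, and $d(x,y)=\inf\{|a|: a\equiv\delta(x,y) \bmod \lambda(x)\}$ if $x\sim_\sigma y$. The space $C$: for each $k$ with $\lambda_k>0$ a circle $C_k$ of perimeter $\lambda_k$, pairwise disjoint, with $y-x\in\mathbb{R}/\lambda_k\mathbb{Z}$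 the counterclockwise arc length from $x$ to $y$; $L$ a disjoint segment of length $1-\sum_k\lambda_k$ (empty if $0$); uniform on $C$ means the probability measure giving arcs and subsegments their length. *)

From HB Require Import structures.
From mathcomp Require Import all_boot all_order all_algebra.
From mathcomp Require Import finmap.
From mathcomp Require Import all_classical all_reals all_analysis.
Set Implicit Arguments. Unset Strict Implicit. Unset Printing Implicit Defensive.
Import Order.TTheory GRing.Theory Num.Theory.
Local Open Scope classical_set_scope.
Local Open Scope ring_scope.
Local Open Scope fset_scope.

(* A virtual permutation is encoded as a family  s : {fset E} -> E -> E *)
(* where s I is a permutation of I (extended by the identity outside I). *)
Definition is_vperm (E : choiceType) (s : {fset E} -> E -> E) : Prop :=
  (forall I : {fset E}, forall x, x \in I -> s I x \in I) /\
  (forall I : {fset E}, {in I &, injective (s I)}) /\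
  (forall I : {fset E}, forall x, x \notin I -> s I x = x) /\
  (forall (I J : {fset E}), I `<=` J -> forall x, x \in I ->
     exists m : nat, (0 < m)%N /\ iter m (s J) x = s I x /\
       forall m' : nat, (0 < m')%N -> (m' < m)%N -> iter m' (s J) x \notin I).

Definition vequiv (E : choiceType) (s : {fset E} -> E -> E) (x y : E) : Prop :=
  exists I : {fset E}, [/\ x \in I, y \in I & exists n : nat, iter n (s I) x = y].

Definition vfixed (E : choiceType) (s : {fset E} -> E -> E) (x : E) : Prop :=
  forall I : {fset E}, x \in I -> s I x = x.

Definition kI (E : choiceType) (s : {fset E} -> E -> E) (I : {fset E}) (x y : E) : nat :=
  find (fun n => iter n (s I) x == y) (iota 0 #|` I|).

Definition card_class (E : choiceType) (s : {fset E} -> E -> E) (I : {fset E}) (x : E)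
  : nat := #|` [fset y in I | `[< vequiv s x y >]]|.

Definition dmod (R : realType) (a l : R) : R :=
  inf [set `|a - n%:~R * l| | n in [set: int]].

Definition lamk (R : realType) (E : Type) (eqv : E -> E -> Prop) (lam : E -> R)
  (k : nat) : R :=
  sup [set inf (range (lam \o f)) | f in
        [set f : 'I_k -> E | forall i j : 'I_k, i != j -> ~ eqv (f i) (f j)]].

Definition vdist (R : realType) (E : choiceType) (s : {fset E} -> E -> E)
  (lam : E -> R) (Delta : E -> E -> R) (x y : E) : R :=
  if `[< vequiv s x y >] then dmod (Delta x y) (lam x) else 1.

(* The space C.  A point of C is encoded as a pair (k, t) : nat * R:     *)
(*  - (0, t), 0 <= t < 1 - sum_k lambda_k  : the point t of the segment L*)
(*  - (k, t), k >= 1, 0 <= t < lambda_k    : the point of the circle C_k *)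
(*    at counterclockwise arc length t from a base point.                *)
(* Lam k = lambda_k for k >= 1 (Lam 0 is unused).                        *)
Definition Lmass (R : realType) (Lam : nat -> R) : \bar R :=
  (1%:E - \sum_(1 <= k <oo) (Lam k)%:E)%E.

Definition unifC (R : realType) (Lam : nat -> R) (B : set (nat * R)) : \bar R :=
  (\sum_(1 <= k <oo) (@lebesgue_measure R) [set t : R | (0 <= t)%R /\ (t < Lam k)%R /\ B (k, t)]
   + (@lebesgue_measure R) [set t : R | (0 <= t)%R /\ (t%:E < Lmass Lam)%E /\ B (0%N, t)])%E.

Definition Cdist (R : realType) (Lam : nat -> R) (p q : nat * R) : R :=
  if (p.1 == q.1) && (p.1 != 0%N) then dmod (p.2 - q.2) (Lam p.1)
  else if (p == q) && (p.1 == 0%N) then 0 else 1.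

Definition Lamk (R : realType) (E : choiceType) (Omega : Type)
  (sigma : Omega -> {fset E} -> E -> E) (lam : E -> Omega -> R) (w : Omega) (k : nat) : R :=
  lamk (vequiv (sigma w)) (fun x => lam x w) k.

Definition lam_generators (R : realType) (Omega : Type) (Lam : Omega -> nat -> R)
  : set (set Omega) :=
  [set G | exists (k : nat) (A : set R), [/\ (1 <= k)%N, measurable A &
           G = (fun w => Lam w k) @^-1` A]].

Definition bij_isometry (E T : Type) (R : realType) (dE : E -> E -> R) (dK : T -> T -> R)
  (K : set T) (f : E -> T) : Prop :=
  set_bij [set: E] K f /\ forall x y, dK (f x) (f y) = dE x y.

(* Almost surely, simultaneously for all the countably many points of E:
   Delta(x, x) = 0, because k_I(x, x) = 0 for every I; the points X_x are
   pairwise distinct, because two conditionally independent uniform points of C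
   fall into a common cell of a partition of C into countably many arcs of
   length 1/(N+1) with probability at most 1/(N+1); and the assumed relations
   between sigma and (X_x) hold.  On that event x |-> X_x is injective, and
   distances agree: points that are not sigma-equivalent are at distance 1 on
   both sides, while for x ~ y the representatives Delta(x, y) and X_y - X_x of
   delta(x, y) differ by a multiple of lambda(x) = lambda_k, which does not
   change the distance to lambda_k Z. *)

From HB Require Import structures.
From mathcomp Require Import all_boot all_order all_algebra.
From mathcomp Require Import finmap.
From mathcomp Require Import all_classical all_reals all_analysis.
From mathcomp Require Import ring measurable_realfun.
Import Order.TTheory GRing.Theory Num.Theory.
Local Open Scope classical_set_scope.
Local Open Scope ring_scope.

Section dmod.
Variables (R : realType) (l : R).

Lemma dmodD_intrM (a : R) (m : int) : dmod (a + m%:~R * l) l = dmod a l.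
Proof.
rewrite /dmod; congr inf; apply/seteqP; split => _ [n _ <-].
  by exists (n - m) => //; congr (`|_|); rewrite intrB; ring.
by exists (n + m) => //; congr (`|_|); rewrite intrD; ring.
Qed.

Lemma dmodN (a : R) : dmod (- a) l = dmod a l.
Proof.
rewrite /dmod; congr inf; apply/seteqP; split => _ [n _ <-];
  by exists (- n) => //; rewrite -normrN intrN; congr (`|_|); ring.
Qed.

Lemma dmod0 : dmod 0 l = 0.
Proof.
apply/eqP; rewrite eq_le; apply/andP; split.
  apply: ge_inf; first by exists 0 => _ [n _ <-].
  by exists 0 => //; rewrite mul0r subr0 normr0.
apply: lb_le_inf; first by exists `|0 - 0 * l|, 0.
by move=> _ [n _ <-].
Qed.

End dmod.

Lemma vequiv_refl (E : choiceType) (s : {fset E} -> E -> E) (x : E) : vequiv s x x.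
Proof. by exists [fset x]%fset; split; [rewrite inE|rewrite inE|exists 0%N]. Qed.

Lemma kI_refl (E : choiceType) (s : {fset E} -> E -> E) (I : {fset E}) (x : E) :
  x \in I -> kI s I x x = 0%N.
Proof.
move=> xI; rewrite /kI.
have : (0 < #|` I|)%N by rewrite cardfs_gt0; apply/fset0Pn; exists x.
by case: #|` I| => [//|m] _ /=; rewrite eqxx.
Qed.

Lemma embedding_bij_isometry (R : realType) (E : choiceType) (s : {fset E} -> E -> E)
    (lam : E -> R) (Delta : E -> E -> R) (Lam : nat -> R) (Y : E -> nat * R) :
  injective Y ->
  (forall x, Delta x x = 0) ->
  (forall x y, x != y -> vequiv s x y <-> (Y x).1 = (Y y).1 /\ (Y x).1 != 0%N) ->
  (forall x y, x != y -> vequiv s x y -> lam x = Lam (Y x).1) ->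
  (forall x y, x != y -> vequiv s x y ->
     exists m : int, Delta x y - ((Y y).2 - (Y x).2) = m%:~R * lam x) ->
  bij_isometry (vdist s lam Delta) (Cdist Lam) [set Y x | x in [set: E]] Y.
Proof.
move=> Yinj Delta0 Ycircle Ylam Ydelta; split; first by apply: inj_bij => x y _ _ /Yinj.
move=> x y; rewrite /vdist /Cdist.
have [<-|xy] := eqVneq x y.
  rewrite asboolT ?Delta0 ?dmod0 ?subrr ?dmod0 ?eqxx /=; last exact: vequiv_refl.
  by case: ifP => // /negbFE ->.
have [xy_equiv|xy_nequiv] := pselect (vequiv s x y).
  have [Yxy Yx0] := (Ycircle x y xy).1 xy_equiv.
  have [m hm] := Ydelta x y xy xy_equiv.
  rewrite asboolT // -(Ylam x y xy xy_equiv) Yxy eqxx -Yxy Yx0 /=.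
  have -> : Delta x y = (Y y).2 - (Y x).2 + m%:~R * lam x by rewrite -hm; ring.
  by rewrite dmodD_intrM -dmodN opprB.
rewrite asboolF //; case: ifP => [/andP[/eqP Yxy Yx0]|_].
  by case: xy_nequiv; apply/(Ycircle x y xy).
case: ifP => [/andP[/eqP /Yinj exy _]|//].
by rewrite exy eqxx in xy.
Qed.

Lemma ae_forall_count d (T : measurableType d) (R : realType)
    (mu : {measure set T -> \bar R}) (C : countType) (Q : C -> T -> Prop) :
  (forall c, {ae mu, forall w, Q c w}) -> {ae mu, forall w, forall c, Q c w}.
Proof.
move=> h.
have H n : {ae mu, forall w, forall c, pickle_inv n = Some c -> Q c w}.
  case: (pickle_inv n) => [c|]; last exact: filterE.
  by apply: filterS (h c) => w Qw c' [<-].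
apply: filterS (ae_foralln H) => w H' c.
exact: (H' (choice.pickle c) c (pickleK_inv c)).
Qed.

Lemma ae_eq0_of_integral_abs_small d (T : measurableType d) (R : realType)
    (mu : {measure set T -> \bar R}) (f : T -> R) :
  measurable_fun setT f ->
  (forall eps, 0 < eps -> (\int[mu]_(w in setT) (`|f w|%:E) <= eps%:E)%E) ->
  {ae mu, forall w, f w = 0}.
Proof.
move=> mf small.
have int0 : (\int[mu]_(w in setT) `|(f w)%:E| = 0)%E.
  rewrite (eq_integral (fun w => `|f w|%:E)); last by move=> w _; rewrite abse_EFin.
  apply/eqP; rewrite eq_le integral_ge0 ?andbT //.
  by apply/lee_addgt0Pr => e e0; rewrite add0e; exact: small.
have mEf : measurable_fun setT (EFin \o f) by exact/measurable_EFinP.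
have := (ae_eq_integral_abs mu measurableT mEf).1 int0.
by apply: filterS => w /(_ I) [].
Qed.

Section grid.
Context {R : realType}.

Definition cell (k : nat) (a b : R) : set (nat * R) := [set k] `*` `[a, b[.

Lemma measurable_cell k a b : measurable (cell k a b).
Proof. exact: measurableX. Qed.

Variable N : nat.

Definition grid_cell (n : nat) : set (nat * R) :=
  if @pickle_inv (nat * int)%type n is Some (k, j)
  then cell k (j%:~R / N.+1%:R) ((j + 1)%:~R / N.+1%:R) else set0.

Lemma measurable_grid_cell n : measurable (grid_cell n).
Proof. by rewrite /grid_cell; case: pickle_inv => [[k j]|] //; exact: measurable_cell. Qed.

Lemma grid_cell_pickle_inv n p : grid_cell n p ->
  @pickle_inv (nat * int)%type n = Some (p.1, Num.floor (p.2 * N.+1%:R)).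
Proof.
rewrite /grid_cell; case: pickle_inv => [[k j]|] // [/= <-].
rewrite in_itv /= => /andP[jp pj]; congr (Some (_, _)); apply/esym/floor_def.
by rewrite -ler_pdivrMr // jp /= -ltr_pdivlMr.
Qed.

Lemma grid_cell_cover p : exists n, grid_cell n p.
Proof.
exists (choice.pickle (p.1, Num.floor (p.2 * N.+1%:R))).
rewrite /grid_cell pickleK_inv; split => //=.
have /andP[floor_le lt_floor] := floor_itv (p.2 * N.+1%:R).
by rewrite in_itv /= ler_pdivrMr // ltr_pdivlMr // floor_le.
Qed.

Lemma trivIset_grid_cell : trivIset setT grid_cell.
Proof.
move=> i j _ _ [p [/grid_cell_pickle_inv pi /grid_cell_pickle_inv pj]].
have := @pickle_invK (nat * int)%type i; have := @pickle_invK (nat * int)%type j.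
by rewrite pi pj => <- <-.
Qed.

Lemma grid_cell_le (g : set (nat * R) -> \bar R) n :
  (forall k a b, a <= b -> (g (cell k a b) <= (b - a)%:E)%E) ->
  (g (grid_cell n) <= (N.+1%:R^-1)%:E)%E.
Proof.
rewrite /grid_cell => g_cell; case: pickle_inv => [[k j]|].
  rewrite (le_trans (g_cell _ _ _ _)) //.
    by rewrite ler_pM2r ?invr_gt0 // ler_int lerDl.
  by rewrite lee_fin -mulrBl -intrB addrAC subrr add0r mul1r.
have -> : set0 = cell 0 0 0 by rewrite /cell set_itvco0 setX0.
by rewrite (le_trans (g_cell _ _ _ _)) // subrr lee_fin invr_ge0 ltW.
Qed.

End grid.

Section uniform_on_C.
Context {R : realType}.
Local Notation lebesgue := (@lebesgue_measure R).

Lemma measurable_nonneg_EFin_lt (e : \bar R) :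
  measurable [set t : R | 0 <= t /\ (t%:E < e)%E].
Proof.
have -> : [set t : R | 0 <= t /\ (t%:E < e)%E] =
    `[0, +oo[ `&` (EFin @^-1` `]-oo, e[) by apply/seteqP; split => t /=; rewrite !in_itv /= andbT.
apply: measurableI; first exact: measurable_itv.
by rewrite -[_ @^-1` _]setTI; apply: (@EFin_measurable R setT measurableT); exact: emeasurable_itv.
Qed.

Lemma lebesgue_measureI_itv_le (A : set R) (a b : R) : measurable A -> a <= b ->
  (lebesgue (A `&` `[a, b[) <= (b - a)%:E)%E.
Proof.
move=> mA ab; apply: (@le_trans _ _ (lebesgue `[a, b[)).
  apply: le_measure; rewrite ?inE; [|exact: measurable_itv|exact: subIsetr].
  by apply: measurableI => //; exact: measurable_itv.
by rewrite lebesgue_measure_itv /= lte_fin; case: ltP => // ba; rewrite lee_fin subr_ge0.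
Qed.

Lemma unifC_ge0 (Lam : nat -> R) (B : set (nat * R)) : (0 <= unifC Lam B)%E.
Proof. by apply: adde_ge0 => //; apply: nneseries_ge0. Qed.

Lemma unifC_cell_le (Lam : nat -> R) (k : nat) (a b : R) : a <= b ->
  (unifC Lam (cell k a b) <= (b - a)%:E)%E.
Proof.
move=> ab; rewrite /unifC /cell /=.
have piece i e : [set t : R | 0 <= t /\ (t%:E < e)%E /\ ([set k] `*` `[a, b[) (i, t)] =
    if i == k then [set t : R | 0 <= t /\ (t%:E < e)%E] `&` `[a, b[ else set0.
  apply/seteqP; split => t /=; case: eqVneq => [->|ik] //=.
  - by move=> [t0 [te [_ tab]]].
  - by move=> [t0 [te [ik' _]]]; rewrite ik' eqxx in ik.
  - by move=> [[t0 te] tab].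
have pieceR i : [set t : R | 0 <= t /\ t < Lam i /\ ([set k] `*` `[a, b[) (i, t)] =
    if i == k then [set t : R | 0 <= t /\ (t%:E < (Lam i)%:E)%E] `&` `[a, b[ else set0.
  by rewrite -piece; apply/seteqP; split => t /=; rewrite lte_fin.
rewrite piece; under eq_eseriesr do rewrite pieceR; clear piece pieceR.
case: k => [|k].
  rewrite eseries0 ?add0e => [|i i_ge1 _]; last by case: eqVneq i_ge1 => // ->.
  by apply: lebesgue_measureI_itv_le => //; exact: measurable_nonneg_EFin_lt.
rewrite measure0 adde0 ereal_series (@nneseriesD1 _ _ k.+1) //.
rewrite eseries0 ?adde0 => [|i _ /andP[_ /negbTE ->]] //; rewrite eqxx.
by apply: lebesgue_measureI_itv_le => //; exact: measurable_nonneg_EFin_lt.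
Qed.

End uniform_on_C.

Section ge0_integral_le_scale.
Import HBNNSimple.

(* No measurability of [g] is assumed, so [ge0_le_integral] does not apply:
   we compare the suprema of simple functions directly. *)
Lemma ge0_integral_le_scale d (T : measurableType d) (R : realType)
    (mu : {measure set T -> \bar R}) (f g : T -> \bar R) (c : R) :
  0 < c -> (forall x, (0 <= f x)%E) -> (forall x, (0 <= g x)%E) ->
  (forall x, (f x <= c%:E * g x)%E) ->
  (\int[mu]_(x in [set: T]) f x <= c%:E * \int[mu]_(x in [set: T]) g x)%E.
Proof.
move=> c_gt0 f0 g0 fg.
rewrite (ge0_integralTE mu f0) (ge0_integralTE mu g0) /=.
apply: ge_ereal_sup => _ [h /= hf <-].
have cV_ge0 : 0 <= c^-1 by rewrite invr_ge0 ltW.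
pose h' := scale_nnsfun h cV_ge0.
have -> : sintegral mu h = (c%:E * sintegral mu h')%E.
  by rewrite sintegralrM muleA -EFinM divff ?gt_eqF // mul1e.
rewrite lee_pmul2l ?lte_fin //; apply: ereal_sup_ubound; exists h' => // x.
rewrite /h' /= -[X in (X <= _)%E]mul1e.
have : ((h x)%:E <= c%:E * g x)%E := le_trans (hf x) (fg x).
move: (g x) (g0 x) => [r| |] // r0.
- by rewrite -!EFinM !lee_fin mul1r ler_pdivrMl // mulrC.
- by rewrite leey.
Qed.

End ge0_integral_le_scale.

Section coincidence_negligible.
Context {d} {Omega : measurableType d} {R : realType} {P : {measure set Omega -> \bar R}}.
Hypothesis P_le1 : (P setT <= 1)%E.
Context {Z1 Z2 : Omega -> nat * R} {g : set (nat * R) -> Omega -> \bar R}.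
Hypotheses (mZ1 : measurable_fun setT Z1) (mZ2 : measurable_fun setT Z2).
Hypothesis g_ge0 : forall B w, (0 <= g B w)%E.
Hypothesis g_cell : forall k a b w, a <= b -> (g (cell k a b) w <= (b - a)%:E)%E.
Hypothesis law_Z1 : forall B : set (nat * R), measurable B ->
  P (Z1 @^-1` B) = (\int[P]_(w in setT) g B w)%E.
Hypothesis law_Z1Z2 : forall B : set (nat * R), measurable B ->
  P (Z1 @^-1` B `&` Z2 @^-1` B) = (\int[P]_(w in setT) (g B w * g B w))%E.

Let measurable_preimage (Z : Omega -> nat * R) B :
  measurable_fun setT Z -> measurable B -> measurable (Z @^-1` B).
Proof. by move=> mZ mB; rewrite -[_ @^-1` _]setTI; exact: mZ. Qed.

Let same_cell N n := Z1 @^-1` grid_cell N n `&` Z2 @^-1` grid_cell N n.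

Let measurable_same_cell N n : measurable (same_cell N n).
Proof. by apply: measurableI; apply: measurable_preimage => //; exact: measurable_grid_cell. Qed.

(* For each cell [C], [P(Z1, Z2 in C) = E[g(C)^2] <= P(Z1 in C) / N.+1]; the cells are disjoint. *)
Lemma measure_same_grid_cell_le N :
  (P (\bigcup_n same_cell N n) <= (N.+1%:R^-1)%:E)%E.
Proof.
have mcell n : measurable (Z1 @^-1` grid_cell N n).
  by apply: measurable_preimage => //; exact: measurable_grid_cell.
apply: (le_trans (measure_sigma_subadditive P (measurable_same_cell N) _ (@subset_refl _ _))).
  exact: bigcupT_measurable.
apply: (@le_trans _ _ (\sum_(n <oo) ((N.+1%:R^-1)%:E * P (Z1 @^-1` grid_cell N n)))%E).
  apply: lee_nneseries => [n _ _|n _]; first exact: measure_ge0.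
  have mgrid := @measurable_grid_cell R N n.
  rewrite /same_cell law_Z1Z2 // law_Z1 //.
  apply: ge0_integral_le_scale => [|w|//|w]; first by rewrite invr_gt0 ltr0Sn.
    exact: mule_ge0.
  apply: lee_wpmul2r => //; apply: (grid_cell_le N (g^~ w)) => k a b ab.
  exact: g_cell.
rewrite nneseriesZl // -measure_semi_bigcup //; last exact: bigcupT_measurable.
- rewrite -[leRHS]mule1 lee_wpmul2l ?lee_fin ?invr_ge0 //.
  by apply: le_trans P_le1; rewrite le_measure ?inE //; exact: bigcupT_measurable.
- move=> i j _ _ [w [Zi Zj]].
  by apply: (trivIset_grid_cell N) => //; exists (Z1 w).
Qed.

Lemma coincidence_negligible : P.-negligible [set w | Z1 w = Z2 w].
Proof.
exists (\bigcap_N \bigcup_n same_cell N n); split.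
- by apply: bigcapT_measurable => N; exact: bigcupT_measurable.
- apply/eqP; rewrite eq_le measure_ge0 andbT.
  apply/lee_addgt0Pr => e e_gt0; rewrite add0e.
  pose N := Num.Def.archi_bound e^-1.
  apply: (le_trans _ (le_trans (measure_same_grid_cell_le N) _)).
    apply: le_measure; rewrite ?inE; last by move=> w; apply.
    + by apply: bigcapT_measurable => N'; exact: bigcupT_measurable.
    + exact: bigcupT_measurable.
  rewrite lee_fin -[leRHS]invrK lef_pV2 ?posrE ?invr_gt0 ?ltr0Sn //.
  apply/ltW/(lt_le_trans (archi_boundP _)); first by rewrite invr_ge0 ltW.
  by rewrite ler_nat.
- move=> w /= Z12 N _; have [n cell_n] := grid_cell_cover N (Z1 w).
  by exists n => //; split => //=; rewrite -Z12.
Qed.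

End coincidence_negligible.

Lemma Delta_refl_ae {d} {Omega : measurableType d} {R : realType}
    {P : {measure set Omega -> \bar R}} {E : countType} (E_infinite : infinite_set [set: E])
    {sigma : Omega -> {fset E} -> E -> E} {Delta : E -> E -> Omega -> R} :
  (forall x y, measurable_fun [set w | vequiv (sigma w) x y] (Delta x y)) ->
  (forall (x y : E) (eps : R), 0 < eps -> exists N : nat,
      forall I : {fset E}, x \in I -> y \in I -> (N <= #|` I|)%N ->
      (\int[P]_(w in [set w | vequiv (sigma w) x y])
          `|(kI (sigma w) I x y)%:R / (#|` I|)%:R - Delta x y w|%:E <= eps%:E)%E) ->
  {ae P, forall w x, Delta x x w = 0}.
Proof.
move=> Delta_meas Delta_lim; apply: ae_forall_count => x.
have equivT : [set w | vequiv (sigma w) x x] = setT.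
  by apply/seteqP; split => w // _; exact: vequiv_refl.
apply: ae_eq0_of_integral_abs_small; first by rewrite -equivT.
move=> e e_gt0; have [N HN] := Delta_lim x x e e_gt0.
have [B _ N_le_B] := infinite_set_fset N E_infinite.
have xI : x \in (x |` B)%fset by rewrite !inE eqxx.
have := HN _ xI xI (leq_trans N_le_B (fsubset_leq_card (fsubsetUr _ _))).
by rewrite equivT; under eq_integral do rewrite kI_refl // mul0r sub0r normrN.
Qed.

Lemma X_injective_ae {d} {Omega : measurableType d} {R : realType}
    {P : probability Omega R} {E : countType} {Lam : Omega -> nat -> R}
    {X : E -> Omega -> nat * R} :
  (forall x, measurable_fun setT (X x)) ->
  (forall (n : nat) (xs : 'I_n -> E), injective xs ->
      forall B : 'I_n -> set (nat * R), (forall i, measurable (B i)) ->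
      P (\bigcap_(i in [set: 'I_n]) (X (xs i) @^-1` B i)) =
      (\int[P]_w \prod_(i < n) unifC (Lam w) (B i))%E) ->
  {ae P, forall w, injective (X^~ w)}.
Proof.
move=> X_meas X_iid.
have law1 x (B : set (nat * R)) : measurable B ->
    P (X x @^-1` B) = (\int[P]_w unifC (Lam w) B)%E.
  move=> mB; have := X_iid 1%N (fun=> x) (fun i j _ => etrans (ord1 i) (esym (ord1 j)))
    (fun=> B) (fun=> mB).
  under eq_integral do rewrite big_ord1.
  move=> <-; congr (P _); apply/seteqP; split => w /=; first by move=> Bw i.
  by move=> /(_ ord0 I).
have law2 x y : x != y -> forall B : set (nat * R), measurable B ->
    P (X x @^-1` B `&` X y @^-1` B) = (\int[P]_w (unifC (Lam w) B * unifC (Lam w) B))%E.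
  move=> xy B mB; pose xs (i : 'I_2) := if i == ord0 then x else y.
  have xs_inj : injective xs.
    move=> i j; rewrite /xs.
    case: (eqVneq i ord0) => [->|i0]; case: (eqVneq j ord0) => [->|j0] //.
    - by move=> exy; rewrite exy eqxx in xy.
    - by move=> eyx; rewrite eyx eqxx in xy.
    - by move=> _; apply/val_inj; case: i j i0 j0 => [[|[|i]] ?] [[|[|j]] ?].
  have := X_iid 2%N xs xs_inj (fun=> B) (fun=> mB).
  under eq_integral do rewrite big_ord_recl big_ord1.
  move=> <-; congr (P _); apply/seteqP; split => w /=.
    by move=> [Bx By] i _; rewrite /xs; case: ifP.
  by move=> H; split; [exact: (H ord0 I)|exact: (H ord_max I)].
have pair_ae : {ae P, forall w (p : E * E), p.1 != p.2 -> X p.1 w <> X p.2 w}.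
  apply: ae_forall_count => -[x y] /=.
  have [->|xy] := eqVneq x y; first exact: filterE.
  have := coincidence_negligible (probability_le1 P measurableT) (X_meas x) (X_meas y)
    (fun B w => unifC_ge0 (Lam w) B) (fun k a b w => unifC_cell_le (Lam w) k a b) (law1 x)
    (law2 x y xy).
  by move/negligibleS; apply => w /= /not_implyP[_ /contrapT].
apply: filterS pair_ae => w Xinj x y Xxy; apply/eqP; apply: contraT => xy.
by case: (Xinj (x, y) xy Xxy).
Qed.

Local Open Scope fset_scope.
Theorem proposition4p2 (R : realType) (dm : measure_display) (Omega : measurableType dm)
  (P : probability Omega R) (E : countType)
  (E_infinite : infinite_set [set: E])
  (sigma : Omega -> {fset E} -> E -> E)
  (sigma_vperm : forall w, is_vperm (sigma w))
  (sigma_meas : forall (I : {fset E}) (x y : E), measurable [set w | sigma w I x = y])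
  (* central law: each sigma_I has conjugation-invariant law *)
  (sigma_central : forall (I : {fset E}) (tau tau' : E -> E),
      {in I, forall x, tau x \in I} -> {in I, forall x, tau' x \in I} ->
      {in I, cancel tau tau'} -> {in I, cancel tau' tau} ->
      forall pi : E -> E,
      P [set w | {in I, sigma w I =1 pi}] =
      P [set w | {in I, (tau \o sigma w I \o tau') =1 pi}])
  (* lambda(x): L^1 limit of |I cap C_sigma(x)| / |I| as |I| -> oo *)
  (lam : E -> Omega -> R)
  (lam_meas : forall x, measurable_fun [set: Omega] (lam x))
  (lam_lim : forall (x : E) (eps : R), 0 < eps -> exists N : nat,
      forall I : {fset E}, (N <= #|` I|)%N ->
      (\int[P]_w `|(card_class (sigma w) I x)%:R / (#|` I|)%:R - lam x w|%:E
         <= eps%:E)%E)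
  (* Delta(x,y): L^1 limit (on the event x ~ y) of k_I(x,y) / |I| *)
  (Delta : E -> E -> Omega -> R)
  (Delta_meas : forall x y, measurable_fun [set w | vequiv (sigma w) x y] (Delta x y))
  (Delta_lim : forall (x y : E) (eps : R), 0 < eps -> exists N : nat,
      forall I : {fset E}, x \in I -> y \in I -> (N <= #|` I|)%N ->
      (\int[P]_(w in [set w | vequiv (sigma w) x y])
          `|(kI (sigma w) I x y)%:R / (#|` I|)%:R - Delta x y w|%:E <= eps%:E)%E)
  (X : E -> Omega -> nat * R)
  (X_meas : forall x, measurable_fun [set: Omega] (X x))
  (* conditionally on (lambda_k), the X_x are i.i.d. uniform on C *)
  (X_cond_iid_unif : forall (n : nat) (xs : 'I_n -> E), injective xs ->
      forall B : 'I_n -> set (nat * R), (forall i, measurable (B i)) ->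
      forall G : set Omega, <<s lam_generators (Lamk sigma lam) >> G ->
      P (G `&` \bigcap_(i in [set: 'I_n]) (X (xs i) @^-1` B i))%classic =
      (\int[P]_(w in G) \prod_(i < n) unifC (Lamk sigma lam w) (B i))%E)
  (X_L : {ae P, forall w, forall x, (X x w).1 = 0%N <-> vfixed (sigma w) x})
  (X_circle : {ae P, forall w, forall x y, x != y ->
      (vequiv (sigma w) x y <-> ((X x w).1 = (X y w).1 /\ (X x w).1 != 0%N)) /\
      (vequiv (sigma w) x y ->
         lam x w = Lamk sigma lam w (X x w).1 /\ lam y w = Lamk sigma lam w (X x w).1)})
  (X_delta : {ae P, forall w, forall x y, x != y -> vequiv (sigma w) x y ->
      exists m : int, Delta x y w - ((X y w).2 - (X x w).2) = m%:~R * lam x w}) :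
  {ae P, forall w,
     bij_isometry (vdist (sigma w) (fun x => lam x w) (fun x y => Delta x y w))
                  (Cdist (Lamk sigma lam w))
                  [set X x w | x in [set: E]] (fun x => X x w)}.
Proof.
have G_setT : <<s lam_generators (Lamk sigma lam) >> setT.
  by case: (sigma_algebra_dynkin (smallest_sigma_algebra setT (lam_generators (Lamk sigma lam)))).
have X_iid n xs (xs_inj : injective xs) B (mB : forall i, measurable (B i)) :=
  etrans (congr1 P (esym (setTI _))) (X_cond_iid_unif n xs xs_inj B mB setT G_setT).
have X_inj := X_injective_ae X_meas X_iid.
have Delta_refl := Delta_refl_ae E_infinite Delta_meas Delta_lim.
apply: filter_app Delta_refl; apply: filter_app X_inj.
apply: filter_app X_delta; apply: filterS X_circle => w Xcircle Xdelta Xinj Delta0.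
apply: embedding_bij_isometry => //.
- by move=> x y xy; exact: (Xcircle x y xy).1.
- by move=> x y xy xy_equiv; exact: ((Xcircle x y xy).2 xy_equiv).1.
Qed.
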